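(* Let $i\ge0$, let $\mathbf{e}_i$ be a 1-dimensional error pattern at level $i$, let $\mathbf{e}_{i+1}$ be a 1-dimensional preimage of $\mathbf{e}_i$, and let $P_{i+1}$ be the number of paths of $\mathbf{e}_{i+1}$. Then $\mathrm{wt}(\mathbf{e}_{i+1})+P_{i+1}\ge2\,\mathrm{wt}(\mathbf{e}_i)$.
   Context: 1-dimensional model. For $j\ge0$, the line at level $j$ is the cycle with vertex set $\mathbb{Z}/2^j\mathbb{Z}$ and edges $\{v,v+1\}$, $v\in\mathbb{Z}/2^j\mathbb{Z}$ (for $j=0$, one vertex with a loop edge). A 1-dimensional error pattern at level $j$ is a subset of these edges; $\mathrm{wt}$ is its number of edges; its syndrome is the set of vertices incident to an odd number of its edges. The number of paths of a pattern is the number of connected components (maximal runs of consecutive edges) of the pattern, except that it is $0$ when the pattern is the whole cycle. At level $j+1$, block $m\in\mathbb{Z}/2^j\mathbb{Z}$ consists of the left edge $\{2m,2m+1\}$ and right edge $\{2m+1,2m+2\}$ and corresponds to the edge $\{m,m+1\}$ at level $j$. One reduction stage applied to a pattern $\mathbf{f}$ at level $j+1$ with syndrome $S$: (a) for every block, if $2m+1,2m+2\in S$, flip (add mod 2) the right edge and remove both from $S$; (b) then for every block, if $2m+1$ is still in $S$, flip the left edge. In the resulting pattern $\mathbf{f}'$ each block contains $0$ or $2$ edges; the image of $\mathbf{f}$ is the pattern at level $j$ containing $\{m,m+1\}$ iff block $m\subseteq\mathbf{f}'$. A pattern $\mathbf{f}$ at level $j+1$ is a 1-dimensional preimage of $\mathbf{g}$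 at level $j$ if the image of $\mathbf{f}$ is $\mathbf{g}$. *)

From mathcomp Require Import all_boot.
Set Implicit Arguments. Unset Strict Implicit. Unset Printing Implicit Defensive.

(* Level j: cycle Z/2^j. Vertices and edges are both indexed by 'I_(2^j);
   edge v is {v, v+1 mod 2^j} (for j = 0: the single loop at vertex 0).
   An error pattern at level j is a set of edges {set 'I_(2^j)}. *)

Lemma pow2_gt0 (j : nat) : 0 < 2 ^ j.
Proof. by rewrite expn_gt0. Qed.

Definition ordm (j k : nat) : 'I_(2 ^ j) := Ordinal (ltn_pmod k (pow2_gt0 j)).

Definition wt (j : nat) (f : {set 'I_(2 ^ j)}) : nat := #|f|.

(* syndrome: vertices incident to an odd number of edges of f;
   vertex v is incident to edges v and v-1 (a loop counts twice) *)
Definition syndrome (j : nat) (f : {set 'I_(2 ^ j)}) : {set 'I_(2 ^ j)} :=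
  [set v : 'I_(2 ^ j) | (ordm j v \in f) (+) (ordm j (v + 2 ^ j - 1) \in f)].

Definition adj (j : nat) (f : {set 'I_(2 ^ j)}) : rel 'I_(2 ^ j) :=
  fun u v => [&& u \in f, v \in f &
     (val v == (u + 1) %% 2 ^ j) || (val u == (v + 1) %% 2 ^ j)].

Definition npaths (j : nat) (f : {set 'I_(2 ^ j)}) : nat :=
  if f == [set: 'I_(2 ^ j)] then 0 else n_comp (adj f) (mem f).

(* One reduction stage from level j+1 to level j.  Block m (m < 2^j) has
   left edge 2m and right edge 2m+1. *)
Section Reduction.
Variables (j : nat) (f : {set 'I_(2 ^ j.+1)}).

Let S := syndrome f.

Definition condA (m : nat) : bool :=
  (ordm j.+1 (2 * m + 1) \in S) && (ordm j.+1 (2 * m + 2) \in S).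

(* step (b): 2m+1 still in S after step (a) *)
Definition condB (m : nat) : bool :=
  (ordm j.+1 (2 * m + 1) \in S) && ~~ condA m.

Definition reduced : {set 'I_(2 ^ j.+1)} :=
  [set e : 'I_(2 ^ j.+1) |
     (e \in f) (+) (if odd e then condA e./2 else condB e./2)].

Definition image : {set 'I_(2 ^ j)} :=
  [set m : 'I_(2 ^ j) |
     (ordm j.+1 (2 * m) \in reduced) && (ordm j.+1 (2 * m + 1) \in reduced)].

End Reduction.

Definition is_preimage (j : nat) (f : {set 'I_(2 ^ j.+1)}) (g : {set 'I_(2 ^ j)}) :=
  image f = g.

From mathcomp Require Import all_boot zify.
(* Imported after all_boot so that [image] is the reduction image of Defs,
   not the [image] notation of fintype. *)
From Pilot Require Import Defs.
Set Implicit Arguments. Unset Strict Implicit. Unset Printing Implicit Defensive.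

(* An edge of the corrected pattern f' that is not in f was flipped in
   stage (a) or (b), and both stages flip an edge only when the syndrome
   contains its right endpoint; as the edge itself is absent, the next edge
   is present, so the flipped edge immediately precedes a path of f.
   Distinct such edges precede distinct paths, since a path of the cycle
   has a unique first edge.  Hence |f'| <= wt f + #paths, while every edge
   of the image contributes a whole block, i.e. two edges, to f'. *)

Section Cycle.
Variable j : nat.
Local Notation N := (2 ^ j).
Implicit Types (f : {set 'I_N}) (e h s x y z : 'I_N).

Definition cyc_succ e : 'I_N := ordm j (e + 1).
Definition cyc_pred e : 'I_N := ordm j (e + N - 1).

Lemma ordm_val x : ordm j x = x.
Proof. by apply: val_inj; rewrite /= modn_small. Qed.

Lemma cyc_succ_ordm a : cyc_succ (ordm j a) = ordm j a.+1.
Proof. by apply: val_inj; rewrite /= modnDml addn1. Qed.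

Lemma cyc_succK : cancel cyc_succ cyc_pred.
Proof.
move=> e; apply: val_inj => /=.
have N_gt0 := pow2_gt0 j.
by rewrite -addnBA // modnDml -addnA subnKC // modnDr modn_small.
Qed.

Lemma cyc_succ_inj : injective cyc_succ.
Proof. exact: can_inj cyc_succK. Qed.

Lemma in_syndrome_succ f e :
  (cyc_succ e \in syndrome f) = (cyc_succ e \in f) (+) (e \in f).
Proof. by rewrite inE ordm_val -/(cyc_pred _) cyc_succK. Qed.

Lemma adj_sym f : symmetric (adj f).
Proof. by move=> x y; rewrite /adj andbCA orbC. Qed.

Lemma adjE f x y :
  adj f x y = [&& x \in f, y \in f & (y == cyc_succ x) || (x == cyc_succ y)].
Proof. by []. Qed.

Definition run_preds f := [set e | (e \notin f) && (cyc_succ e \in f)].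

Definition on_run f s x :=
  exists k, x = ordm j (s + k) /\ forall i, i <= k -> ordm j (s + i) \in f.

Lemma on_run_start f s s' : cyc_pred s' \notin f -> on_run f s s' -> s' = s.
Proof.
move=> pred_s'_out [[|k] [s'E on_k]]; first by rewrite s'E addn0 ordm_val.
have : ordm j (s + k) \in f by apply: on_k.
suff -> : ordm j (s + k) = cyc_pred s' by rewrite (negbTE pred_s'_out).
by rewrite s'E -addSnnS -cyc_succ_ordm cyc_succK.
Qed.

Section RunFrom.
Variables (f : {set 'I_N}) (s : 'I_N).
Hypotheses (s_in : s \in f) (pred_s_out : cyc_pred s \notin f).

Lemma on_run_adj x z : on_run f s x -> adj f x z -> on_run f s z.
Proof.
move=> [k [-> on_k]]; rewrite adjE => /and3P[_ z_in /orP[/eqP zE | /eqP zE]].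
  rewrite zE cyc_succ_ordm -addnS in z_in *.
  exists k.+1; split=> // i; rewrite leq_eqVlt => /orP[/eqP -> // | /on_k //].
case: k on_k zE => [|k] on_k zE.
  by move: z_in; rewrite -[z]cyc_succK -zE addn0 ordm_val (negbTE pred_s_out).
exists k; split; last by move=> i ik; apply: on_k; lia.
by apply: cyc_succ_inj; rewrite -zE cyc_succ_ordm addnS.
Qed.

Lemma connect_on_run y : connect (adj f) s y -> on_run f s y.
Proof.
move=> /connectP[p + ->].
have : on_run f s s.
  exists 0; rewrite addn0 ordm_val; split=> // i.
  by rewrite leqn0 => /eqP ->; rewrite addn0 ordm_val.
elim: p {2 3 5}s => [|z p IHp] x on_x //= /andP[xz p_path].
exact: IHp (on_run_adj on_x xz) p_path.
Qed.

End RunFrom.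

Lemma card_run_preds f : #|run_preds f| <= npaths f.
Proof.
rewrite /npaths; case: ifP => [/eqP -> | _].
  by rewrite leqn0 cards_eq0; apply/eqP/setP => h; rewrite !inE.
have start h : h \in run_preds f -> cyc_succ h \in f /\ cyc_pred (cyc_succ h) \notin f.
  by rewrite inE cyc_succK => /andP[].
have adj_csym := sym_connect_sym (adj_sym f).
pose comp h := root (adj f) (cyc_succ h).
rewrite -(card_in_imset (f := comp)).
  apply: subset_leq_card; apply/subsetP => r /imsetP[h /start[h_in h_out] ->].
  rewrite !inE roots_root //= /comp.
  have [k [-> on_k]] := connect_on_run h_in h_out (connect_root (adj f) (cyc_succ h)).
  exact: on_k.
move=> h h' /start[h_in h_out] /start[h'_in h'_out] /eqP.
rewrite /comp root_connect // => h_h'.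
apply/cyc_succ_inj/esym/(on_run_start h'_out).
exact: (connect_on_run h_in h_out h_h').
Qed.

End Cycle.

Section Reduction.
Variables (j : nat) (f : {set 'I_(2 ^ j.+1)}).

Lemma reduced_flip e : e \in reduced f -> e \notin f -> cyc_succ e \in syndrome f.
Proof.
rewrite inE => + e_out; rewrite (negbTE e_out) /=.
have halfE := odd_double_half e; rewrite -mul2n in halfE.
case: ifP => odd_e /andP[S1 S2]; rewrite /cyc_succ odd_e in halfE *.
  by have <- : 2 * e./2 + 2 = e + 1 by lia.
by have <- : 2 * e./2 + 1 = e + 1 by lia.
Qed.

Lemma reduced_sub : reduced f \subset f :|: run_preds f.
Proof.
apply/subsetP => e e_red; rewrite !inE; have [//|e_out /=] := boolP (e \in f).
by have := reduced_flip e_red e_out; rewrite in_syndrome_succ (negbTE e_out) addbF.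
Qed.

Definition block_edge (mb : 'I_(2 ^ j) * bool) : 'I_(2 ^ j.+1) :=
  ordm j.+1 (2 * mb.1 + mb.2).

Lemma block_edge_inj : injective block_edge.
Proof.
have lt_block (mb : 'I_(2 ^ j) * bool) : 2 * mb.1 + mb.2 < 2 ^ j.+1.
  by case: mb => [m b] /=; have := ltn_ord m; rewrite expnS; case: b => /=; lia.
move=> [m b] [m' b'] /(congr1 val); rewrite /= !modn_small ?(lt_block (_, _)) // => E.
have Eb : b = b' by move: E; case: b; case: b' => /=; lia.
by subst b'; congr pair; apply: val_inj => /=; lia.
Qed.

Lemma card_image : 2 * #|image f| <= #|reduced f|.
Proof.
have -> : 2 * #|image f| = #|setX (image f) [set: bool]|.
  by rewrite cardsX cardsT card_bool mulnC.
rewrite -(card_imset _ block_edge_inj).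
apply/subset_leq_card/subsetP => _ /imsetP[[m b] /setXP[m_im _] ->].
by move: m_im; rewrite inE /block_edge; case: b => /andP[]; rewrite ?addn0.
Qed.

End Reduction.

Theorem lemma2 (i : nat) (e_i : {set 'I_(2 ^ i)}) (e_i1 : {set 'I_(2 ^ i.+1)}) :
  is_preimage e_i1 e_i ->
  wt e_i1 + npaths e_i1 >= 2 * wt e_i.
Proof.
rewrite /is_preimage /wt => <-.
apply: leq_trans (card_image e_i1) _.
apply: leq_trans (subset_leq_card (reduced_sub e_i1)) _.
by rewrite (leq_trans (leq_card_setU _ _)) // leq_add2l card_run_preds.
Qed.
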